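(* Let $K$ be a division ring and $M,N\ge2$ integers. Let $G$ be a group and let $c,d\in K[G]$ have ranks $M$ and $N$ respectively, both contain the identity of $G$ in their supports, and satisfy $cd=1$. Write $c=r_0c_0+\dots+r_{M-1}c_{M-1}$ and $d=s_0d_0+\dots+s_{N-1}d_{N-1}$ with pairwise distinct $c_i\in G$, pairwise distinct $d_j\in G$, nonzero $r_i,s_j\in K$, and $c_0=d_0=1$. Let $\sigma$ be the partition of $\{0,\dots,M-1\}\times\{0,\dots,N-1\}$ with $(i,j)\sim_\sigma(i',j')$ iff $c_id_j=c_{i'}d_{j'}$. (a) Suppose that for every $m$ with $2\le m<M$, every group $G'$ and all $x,y\in K[G']$ of ranks $m$ and $N$, $xy=1$ implies $yx=1$. Then $\sigma$ is row connected; moreover every partition $\pi\le\sigma$ that is realizable with $r_0,\dots,r_{M-1},s_0,\dots,s_{N-1}$ is row connected. (b) Suppose that for every $n$ with $2\le n<N$, every group $G'$ and all $x,y\in K[G']$ of ranks $M$ and $n$, $xy=1$ implies $yx=1$. Then $\sigma$ is column connected; moreover every partition $\pi\le\sigma$ that is realizable with $r_0,\dots,r_{M-1},s_0,\dots,s_{N-1}$ is column connected.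
   Context: $K[G]$ is the group ring; the rank of an element is the number of group elements with nonzero coefficient (its support). For a partition $\pi$ of $\{0,\dots,M-1\}\times\{0,\dots,N-1\}$, $(i,j)\sim_\pi(i',j')$ means the pairs lie in the same block. $\pi\le\sigma$ means every block of $\pi$ is contained in a block of $\sigma$. $\pi$ is realizable with nonzero $r_0,\dots,r_{M-1},s_0,\dots,s_{N-1}\in K$ if for each block $E$, $\sum_{(i,j)\in E}r_is_j$ equals $1$ if $(0,0)\in E$ and $0$ otherwise. Let $\sim_r$ be the equivalence relation on $\{0,\dots,M-1\}$ generated by $i\sim_r i'$ whenever there exist $j,j'$ with $(i,j)\sim_\pi(i',j')$; $\pi$ is row connected if $\sim_r$ has a single class. Similarly $\sim_c$ on $\{0,\dots,N-1\}$ is generated by $j\sim_c j'$ whenever there exist $i,i'$ with $(i,j)\sim_\pi(i',j')$; $\pi$ is column connected if $\sim_c$ has a single class. *)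

(* group rings K[G] over an arbitrary (possibly infinite)
   group G, modelled with finmap's finitely supported functions. *)
From HB Require Import structures.
From mathcomp Require Import all_boot all_order all_algebra.
From mathcomp Require Import finmap.
Set Implicit Arguments. Unset Strict Implicit. Unset Printing Implicit Defensive.
Import GRing.Theory.
Local Open Scope ring_scope.
Local Open Scope fset_scope.

Notation grpring K G := {fsfun G -> K with 0%R}.

Section GroupRing.
Variables (K : nzRingType) (G : groupType).

Definition rank (x : grpring K G) : nat := #|` finsupp x|.

Definition gr_one : grpring K G := [fsfun z in [fset (1%g : G)] => (1 : K)].

Definition gr_mul (x y : grpring K G) : grpring K G :=
  [fsfun z in [fset (a * b)%g | a in finsupp x, b in finsupp y] =>
     \sum_(a <- finsupp x) \sum_(b <- finsupp y | (a * b)%g == z) x a * y b].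

End GroupRing.

Section Partitions.
Variables (M N : nat).
Local Notation T := ('I_M * 'I_N)%type.

Definition sigma_part (G : groupType) (ci : 'I_M -> G) (dj : 'I_N -> G)
  : {set {set T}} :=
  equivalence_partition
    (fun p q : T => (ci p.1 * dj p.2)%g == (ci q.1 * dj q.2)%g) [set: T].

Definition same_block (P : {set {set T}}) (x y : T) : bool :=
  [exists B in P, (x \in B) && (y \in B)].

Definition part_le (P Q : {set {set T}}) : Prop :=
  forall B, B \in P -> exists2 C, C \in Q & B \subset C.

Definition idx00 (p : T) : bool := ((p.1 : nat) == 0%N) && ((p.2 : nat) == 0%N).

Definition realizable (K : nzRingType) (P : {set {set T}})
  (r : 'I_M -> K) (s : 'I_N -> K) : Prop :=
  forall E, E \in P ->
    \sum_(p in E) r p.1 * s p.2 = if [exists p in E, idx00 p] then 1 else 0.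

(* generating relations of ~_r and ~_c (both symmetric, so the reflexive
   transitive closure [connect] is the equivalence relation they generate) *)
Definition row_rel (P : {set {set T}}) : rel 'I_M :=
  fun i i' => [exists j, exists j', same_block P (i, j) (i', j')].
Definition col_rel (P : {set {set T}}) : rel 'I_N :=
  fun j j' => [exists i, exists i', same_block P (i, j) (i', j')].

Definition row_connected (P : {set {set T}}) : Prop :=
  forall i i' : 'I_M, connect (row_rel P) i i'.
Definition col_connected (P : {set {set T}}) : Prop :=
  forall j j' : 'I_N, connect (col_rel P) j j'.

End Partitions.

From HB Require Import structures.
From mathcomp Require Import all_boot all_order all_algebra.
From mathcomp Require Import finmap.
Set Implicit Arguments. Unset Strict Implicit. Unset Printing Implicit Defensive.
Import GRing.Theory.
Local Open Scope ring_scope.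
Local Open Scope fset_scope.

(* Fix a partition P <= sigma realizable with the coefficients of c and d, and
   let I be the row class of 0.  Every block of P lies inside the rows of I or
   avoids them, and inside a block all products c_i d_j agree, so the rows of I
   alone already satisfy the convolution equations: c' d = 1 for
   c' = sum_(i in I) r_i c_i.  If I = {0}, then c' = r_0 is a nonzero scalar
   and c' d = 1 is impossible for d of rank N >= 2; otherwise the hypothesis
   on smaller ranks gives d c' = 1, so c' = c by uniqueness of inverses, and
   comparing ranks, I contains every row.  Columns are symmetric, and sigma
   itself is realizable precisely because c d = 1. *)

Lemma big_seq_pred1 (R : Type) (idx : R) (op : Monoid.law idx) (I : eqType)
    (s : seq I) u (F : I -> R) : uniq s ->
  \big[op/idx]_(a <- s | a == u) F a = if u \in s then F u else idx.
Proof.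
move=> s_uniq; case: ifP => us; last by rewrite big_hasC // has_pred1 us.
by rewrite -big_filter filter_pred1_uniq // big_seq1.
Qed.

Section GroupRing.
Variables (K : nzRingType) (G : groupType).
Implicit Types (x y w : grpring K G) (A B : {fset G}).

Local Notation prod_supp x y := [fset (a * b)%g | a in finsupp x, b in finsupp y].

Lemma finsupp_gr_mul x y : finsupp (gr_mul x y) `<=` prod_supp x y.
Proof.
apply/fsubsetP => g; rewrite mem_finsupp /gr_mul fsfun_fun.
by case: ifP; rewrite ?eqxx.
Qed.

Lemma gr_mulE x y z : gr_mul x y z =
  \sum_(a <- finsupp x) \sum_(b <- finsupp y) if (a * b == z)%g then x a * y b else 0.
Proof.
rewrite /gr_mul fsfun_fun; under [RHS]eq_bigr do rewrite -big_mkcond /=.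
case: ifP => // /negbT zNab; symmetry; apply: big1_seq => a /= aX.
apply: big1_seq => b /andP[/eqP abz bY]; case/negP: zNab.
by rewrite -abz; apply/imfset2P; exists a => //; exists b.
Qed.

Lemma gr_mulE_sub {x y A B} z : finsupp x `<=` A -> finsupp y `<=` B ->
  gr_mul x y z = \sum_(a <- A) \sum_(b <- B) if (a * b == z)%g then x a * y b else 0.
Proof.
move=> xA yB; rewrite gr_mulE (big_fset_incl _ xA) => [|a _ aNx]; last first.
  by apply: big1 => b _; rewrite (fsfun_dflt aNx) mul0r if_same.
apply: eq_bigr => a _; rewrite (big_fset_incl _ yB) // => b _ bNy.
by rewrite (fsfun_dflt bNy) mulr0 if_same.
Qed.

Lemma sum_gr_mul_pairing y w (phi : G -> K) :
  \sum_(e <- prod_supp y w) gr_mul y w e * phi e =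
  \sum_(b <- finsupp y) \sum_(f <- finsupp w) y b * w f * phi (b * f)%g.
Proof.
under eq_bigr => e _ do
  (rewrite gr_mulE mulr_suml; under eq_bigr => b _ do rewrite mulr_suml).
rewrite exchange_big; apply: eq_big_seq => b by_; rewrite exchange_big.
apply: eq_big_seq => f fw.
under eq_bigr do rewrite (fun_if (fun k => k * phi _)) mul0r eq_sym.
rewrite -big_mkcond big_seq_pred1 ?fset_uniq //.
by case: imfset2P => // -[]; exists b => //; exists f.
Qed.

Lemma gr_mulA x y w : gr_mul x (gr_mul y w) = gr_mul (gr_mul x y) w.
Proof.
apply/fsfunP => z.
rewrite (gr_mulE_sub z (fsubset_refl _) (finsupp_gr_mul y w)).
rewrite (gr_mulE_sub z (finsupp_gr_mul x y) (fsubset_refl _)) [RHS]exchange_big /=.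
transitivity (\sum_(a <- finsupp x) \sum_(b <- finsupp y) \sum_(f <- finsupp w)
    x a * (y b * w f * if (a * (b * f) == z)%g then 1 else 0)).
  apply: eq_bigr => a _.
  transitivity (x a * \sum_(e <- prod_supp y w)
      gr_mul y w e * if (a * e == z)%g then 1 else 0).
    by rewrite mulr_sumr; apply: eq_bigr => e _; case: ifP; rewrite ?mulr0 ?mulr1.
  rewrite sum_gr_mul_pairing mulr_sumr; apply: eq_bigr => b _.
  by rewrite mulr_sumr.
transitivity (\sum_(f <- finsupp w) \sum_(a <- finsupp x) \sum_(b <- finsupp y)
    x a * y b * if (a * b * f == z)%g then w f else 0).
  rewrite [RHS]exchange_big; apply: eq_bigr => a _; rewrite [RHS]exchange_big.
  apply: eq_bigr => b _; apply: eq_bigr => f _.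
  by rewrite mulgA; case: ifP; rewrite ?mulr0 ?mulr1 ?mulrA.
apply: eq_bigr => f _.
rewrite -(sum_gr_mul_pairing x y (fun e => if (e * f == z)%g then w f else 0)).
by apply: eq_bigr => e _; case: ifP; rewrite ?mulr0.
Qed.

Lemma gr_oneE g : gr_one K G g = if g == 1%g then 1 else 0.
Proof. by rewrite /gr_one fsfun_fun inE. Qed.

Lemma finsupp_gr_one : finsupp (gr_one K G) `<=` [fset 1%g].
Proof.
apply/fsubsetP => g; rewrite mem_finsupp gr_oneE inE.
by case: (g == 1%g); rewrite ?eqxx.
Qed.

Lemma gr_mulr1 x : gr_mul x (gr_one K G) = x.
Proof.
apply/fsfunP => z; rewrite (gr_mulE_sub z (fsubset_refl _) finsupp_gr_one).
under eq_bigr do rewrite big_seq_fset1 gr_oneE eqxx mulg1 mulr1.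
rewrite -big_mkcond big_seq_pred1 ?fset_uniq //.
by case: ifP => // /negbT zNx; rewrite fsfun_dflt.
Qed.

Lemma gr_mul1r x : gr_mul (gr_one K G) x = x.
Proof.
apply/fsfunP => z; rewrite (gr_mulE_sub z finsupp_gr_one (fsubset_refl _)).
rewrite big_seq_fset1; under eq_bigr do rewrite gr_oneE eqxx mul1g mul1r.
rewrite -big_mkcond big_seq_pred1 ?fset_uniq //.
by case: ifP => // /negbT zNx; rewrite fsfun_dflt.
Qed.

Lemma gr_inv_unique x y w :
  gr_mul y x = gr_one K G -> gr_mul x w = gr_one K G -> y = w.
Proof. by move=> yx xw; rewrite -[y]gr_mulr1 -xw gr_mulA yx gr_mul1r. Qed.

End GroupRing.

Section LinearCombination.
Variables (K : nzRingType) (G : groupType) (I : finType) (ci : I -> G) (r : I -> K).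
Implicit Types A : {set I}.

Definition lincomb A : grpring K G :=
  [fsfun g in [fset ci i | i in A] => \sum_(i in A | ci i == g) r i].

Lemma lincombE A g : lincomb A g = \sum_(i in A | ci i == g) r i.
Proof.
rewrite /lincomb fsfun_fun; case: imfsetP => //= gNA; symmetry.
by apply: big1 => i /andP[iA /eqP gi]; case: gNA; exists i.
Qed.

Lemma finsupp_lincomb_sub A : finsupp (lincomb A) `<=` [fset ci i | i in A].
Proof.
apply/fsubsetP => g; rewrite mem_finsupp /lincomb fsfun_fun.
by case: ifP; rewrite ?eqxx.
Qed.

Lemma eq_lincombT (x : grpring K G) :
  (forall g, x g = \sum_(i | ci i == g) r i) -> x = lincomb setT.
Proof.
move=> xE; apply/fsfunP => g; rewrite xE lincombE.
by apply: eq_bigl => i; rewrite in_setT.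
Qed.

Hypothesis ci_inj : injective ci.

Lemma lincomb_ci A i : lincomb A (ci i) = if i \in A then r i else 0.
Proof.
rewrite lincombE; case: ifP => iA; [rewrite (big_pred1 i) | rewrite big_pred0] => //;
  by move=> j; rewrite /= (inj_eq ci_inj); case: eqP => [->|]; rewrite ?iA ?andbF.
Qed.

Hypothesis r_neq0 : forall i, r i != 0.

Lemma finsupp_lincomb A : finsupp (lincomb A) = [fset ci i | i in A].
Proof.
apply/eqP; rewrite eqEfsubset finsupp_lincomb_sub.
by apply/fsubsetP => _ /imfsetP[i /= iA ->]; rewrite mem_finsupp lincomb_ci iA.
Qed.

Lemma rank_lincomb A : rank (lincomb A) = #|A|.
Proof. by rewrite /rank finsupp_lincomb card_imfset //= cardE. Qed.
End LinearCombination.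

Section LinearCombinationProduct.
Variables (K : nzRingType) (G : groupType) (I J : finType).
Variables (ci : I -> G) (r : I -> K) (dj : J -> G) (s : J -> K).
Hypotheses (ci_inj : injective ci) (dj_inj : injective dj).

Lemma gr_mul_lincomb A B g :
  gr_mul (lincomb ci r A) (lincomb dj s B) g =
  \sum_(p in setX A B | (ci p.1 * dj p.2 == g)%g) r p.1 * s p.2.
Proof.
rewrite (gr_mulE_sub g (finsupp_lincomb_sub ci r A) (finsupp_lincomb_sub dj s B)).
rewrite big_imfset /=; last by move=> i i' _ _ /ci_inj.
rewrite (eq_bigl (fun p => (p.1 \in A) && ((p.2 \in B) && (ci p.1 * dj p.2 == g)%g)));
  last by case=> i j; rewrite in_setX andbA.
rewrite -(pair_big_dep (fun i => i \in A) (fun i j => (j \in B) && (ci i * dj j == g)%g)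
  (fun i j => r i * s j)) big_enum /=; apply: eq_bigr => i iA.
rewrite big_imfset /=; last by move=> j j' _ _ /dj_inj.
rewrite big_enum big_mkcondr /=; apply: eq_bigr => j jB.
by rewrite !lincomb_ci // iA jB.
Qed.

Lemma gr_mul_lincomb_set1l i B j :
  gr_mul (lincomb ci r [set i]) (lincomb dj s B) (ci i * dj j)%g =
  if j \in B then r i * s j else 0.
Proof.
rewrite gr_mul_lincomb; case: ifP => jB.
  rewrite (big_pred1 (i, j)) // => -[i' j']; rewrite /= in_setX in_set1 xpair_eqE.
  case: eqP => [-> | _] //=; rewrite (inj_eq (mulgI _)) (inj_eq dj_inj).
  by case: eqP => [-> | _]; rewrite ?jB ?andbT ?andbF.
rewrite big_pred0 // => -[i' j']; rewrite /= in_setX in_set1.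
case: eqP => [-> | _] //=; rewrite (inj_eq (mulgI _)) (inj_eq dj_inj).
by case: eqP => [-> | _]; rewrite ?jB ?andbF.
Qed.

Lemma gr_mul_lincomb_set1r A i j :
  gr_mul (lincomb ci r A) (lincomb dj s [set j]) (ci i * dj j)%g =
  if i \in A then r i * s j else 0.
Proof.
rewrite gr_mul_lincomb; case: ifP => iA.
  rewrite (big_pred1 (i, j)) // => -[i' j']; rewrite /= in_setX in_set1 xpair_eqE.
  case: (j' =P j) => [-> | _]; rewrite ?andbF ?andbT //=.
  rewrite (inj_eq (mulIg _)) (inj_eq ci_inj).
  by case: eqP => [-> | _]; rewrite ?iA ?andbT ?andbF.
rewrite big_pred0 // => -[i' j']; rewrite /= in_setX in_set1.
case: (j' =P j) => [-> | _]; rewrite ?andbF //= (inj_eq (mulIg _)) (inj_eq ci_inj).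
by case: eqP => [-> | _]; rewrite ?iA ?andbF.
Qed.

End LinearCombinationProduct.

Definition block_closed (T : finType) (P : {set {set T}}) (S : {set T}) :=
  forall B, B \in P -> {in B &, forall p q, p \in S -> q \in S}.

Lemma big_block_closed (T : finType) (R : Type) (idx : R)
    (op : Monoid.com_law idx) (P : {set {set T}}) (S : {set T}) (F : T -> R) :
  partition P [set: T] -> block_closed P S ->
  \big[op/idx]_(p in S) F p =
  \big[op/idx]_(B in P | B \subset S) \big[op/idx]_(p in B) F p.
Proof.
move=> /and3P[/eqP covP tiP _] S_closed.
have coverS : cover [set B in P | B \subset S] = S.
  apply/setP => p; apply/bigcupP/idP => [[B] | pS].
    by rewrite inE => /andP[_ /subsetP BS] /BS.
  have pP : p \in cover P by rewrite covP.
  exists (pblock P p); last by rewrite mem_pblock.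
  rewrite inE pblock_mem //=; apply/subsetP => q qB.
  by apply: (S_closed _ (pblock_mem pP) p q) pS; rewrite ?mem_pblock.
rewrite -{1}coverS big_trivIset; last first.
  by apply: trivIsetS tiP; apply/subsetP => B; rewrite inE => /andP[].
by apply: eq_bigl => B; rewrite inE.
Qed.

Lemma connect_sym_from (T : finType) (e : rel T) x :
  symmetric e -> (forall y, connect e x y) -> forall y z, connect e y z.
Proof.
by move=> e_sym xe y z; apply: connect_trans (xe z); rewrite sym_connect_sym.
Qed.

Section Blocks.
Variables (M N : nat).
Local Notation T := ('I_M * 'I_N)%type.
Implicit Types (P Q : {set {set T}}) (p q : T).

Lemma same_block_sym P : symmetric (same_block P).
Proof.
by move=> p q; apply/existsP/existsP => -[B /andP[BP /andP[pB qB]]];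
  exists B; rewrite BP pB qB.
Qed.

Lemma row_rel_sym P : symmetric (row_rel P).
Proof.
move=> i i'; apply/existsP/existsP => -[j /existsP[j' pq]];
  by exists j'; apply/existsP; exists j; rewrite same_block_sym.
Qed.

Lemma col_rel_sym P : symmetric (col_rel P).
Proof.
move=> j j'; apply/existsP/existsP => -[i /existsP[i' pq]];
  by exists i'; apply/existsP; exists i; rewrite same_block_sym.
Qed.

Lemma same_blockW P B p q : B \in P -> p \in B -> q \in B -> same_block P p q.
Proof. by move=> BP pB qB; apply/existsP; exists B; rewrite BP pB qB. Qed.

Lemma part_le_refl P : part_le P P.
Proof. by move=> B BP; exists B. Qed.

Lemma part_le_same_block P Q p q : part_le P Q -> same_block P p q -> same_block Q p q.
Proof.
move=> PQ /existsP[B /andP[BP /andP[pB qB]]]; have [C CQ /subsetP BC] := PQ B BP.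
exact: same_blockW CQ (BC p pB) (BC q qB).
Qed.

Lemma idx00_inj p q : idx00 p -> idx00 q -> p = q.
Proof.
case: p q => [i j] [i' j'] /andP[/eqP i0 /eqP j0] /andP[/eqP i'0 /eqP j'0].
by congr pair; apply: val_inj; rewrite /= ?i0 ?i'0 ?j0 ?j'0.
Qed.

Section Realizable.
Variables (K : nzRingType) (r : 'I_M -> K) (s : 'I_N -> K).

Lemma sum_idx00 (A : {set T}) :
  \sum_(p in A) (if idx00 p then 1 else 0 : K) =
  if [exists p in A, idx00 p] then 1 else 0.
Proof.
case: existsP => [[p /andP[pA p00]] | noA]; last first.
  by apply: big1 => p pA; case: ifP => // p00; case: noA; exists p; rewrite pA.
rewrite (bigD1 p) //= p00 big1 ?addr0 // => q /andP[_ qp].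
by case: ifP => // /(idx00_inj p00) pq; rewrite pq eqxx in qp.
Qed.

Lemma realizable_sum P (S : {set T}) :
  partition P [set: T] -> realizable P r s -> block_closed P S ->
  \sum_(p in S) r p.1 * s p.2 = if [exists p in S, idx00 p] then 1 else 0.
Proof.
move=> partP realP S_closed.
rewrite -sum_idx00 !(big_block_closed _ _ partP S_closed).
by apply: eq_bigr => B /andP[BP _]; rewrite realP // sum_idx00.
Qed.

End Realizable.
End Blocks.

Section Sigma.
Variables (M N : nat) (G : groupType) (ci : 'I_M -> G) (dj : 'I_N -> G).
Local Notation T := ('I_M * 'I_N)%type.

Lemma sigma_equivalence : {in [set: T] & &, equivalence_rel
   (fun p q : T => (ci p.1 * dj p.2)%g == (ci q.1 * dj q.2)%g)}.
Proof. by move=> p q t _ _ _ /=; split=> // /eqP ->. Qed.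

Lemma sigma_partition : partition (sigma_part ci dj) [set: T].
Proof. exact: equivalence_partitionP sigma_equivalence. Qed.

Lemma sigma_blockE E p : E \in sigma_part ci dj -> p \in E ->
  E = [set q | (ci q.1 * dj q.2 == ci p.1 * dj p.2)%g].
Proof.
move=> Esigma pE; have [_ tiP _] := and3P sigma_partition.
apply/setP => q; rewrite inE -(def_pblock tiP Esigma pE) eq_sym.
by rewrite (pblock_equivalence_partition sigma_equivalence) ?in_setT.
Qed.

Lemma same_block_sigma p q :
  same_block (sigma_part ci dj) p q -> (ci p.1 * dj p.2 = ci q.1 * dj q.2)%g.
Proof.
case/existsP=> E /and3P[Esigma pE qE].
by move: qE; rewrite (sigma_blockE Esigma pE) inE => /eqP.
Qed.

End Sigma.

Section Realizability.
Variables (K : nzRingType) (G : groupType) (M N : nat).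
Variables (ci : 'I_M -> G) (r : 'I_M -> K) (dj : 'I_N -> G) (s : 'I_N -> K).
Variables (i0 : 'I_M) (j0 : 'I_N).
Hypotheses (i0_eq0 : i0 = 0%N :> nat) (j0_eq0 : j0 = 0%N :> nat).
Hypotheses (ci0 : ci i0 = 1%g) (dj0 : dj j0 = 1%g).
Hypotheses (ci_inj : injective ci) (dj_inj : injective dj).
Local Notation T := ('I_M * 'I_N)%type.

Lemma exists_idx00_fiber (S : {set T}) g : (i0, j0) \in S ->
  [exists p in [set p in S | (ci p.1 * dj p.2 == g)%g], idx00 p] = (g == 1%g).
Proof.
have p0_00 : idx00 (i0, j0) by rewrite /idx00 i0_eq0 j0_eq0.
move=> p0S; apply/existsP/eqP => [[p] | ->].
  rewrite inE => /andP[/andP[_ /eqP <-]] /(idx00_inj p0_00) <- /=.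
  by rewrite ci0 dj0 mulg1.
by exists (i0, j0); rewrite inE p0S /= ci0 dj0 mulg1 eqxx.
Qed.

Hypothesis cd1 : gr_mul (lincomb ci r setT) (lincomb dj s setT) = gr_one K G.

Lemma realizable_sigma : realizable (sigma_part ci dj) r s.
Proof.
move=> E Esigma; have [_ _ E_neq0] := and3P (sigma_partition ci dj).
have /set0Pn[p pE] : E != set0 by apply: contraNneq E_neq0 => <-.
set g := (ci p.1 * dj p.2)%g.
have -> : E = [set q in [set: T] | (ci q.1 * dj q.2 == g)%g].
  by rewrite (sigma_blockE Esigma pE); apply/setP => q; rewrite !inE.
rewrite exists_idx00_fiber ?in_setT // -gr_oneE -cd1 gr_mul_lincomb //.
by apply: eq_bigl => q; rewrite !inE.
Qed.

Lemma gr_mul_lincomb_block_closed P (I : {set 'I_M}) (J : {set 'I_N}) :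
  partition P [set: T] -> realizable P r s -> part_le P (sigma_part ci dj) ->
  i0 \in I -> j0 \in J ->
  block_closed P (setX I J) ->
  gr_mul (lincomb ci r I) (lincomb dj s J) = gr_one K G.
Proof.
move=> partP realP leP i0I j0J IJ_closed; apply/fsfunP => g.
rewrite gr_mul_lincomb // gr_oneE -(exists_idx00_fiber g (S := setX I J)); last first.
  by rewrite in_setX i0I j0J.
rewrite -(realizable_sum partP realP); first by apply: eq_bigl => p; rewrite !inE.
move=> B BP p q pB qB; rewrite inE => /andP[pIJ /eqP <-].
rewrite inE (IJ_closed B BP p q) //=; apply/eqP/esym/same_block_sigma.
exact: part_le_same_block leP (same_blockW BP pB qB).
Qed.

End Realizability.

Section Connectivity.
Variables (K : unitRingType) (G : groupType) (M N : nat).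
Variables (ci : 'I_M -> G) (r : 'I_M -> K) (dj : 'I_N -> G) (s : 'I_N -> K).
Variables (i0 : 'I_M) (j0 : 'I_N).
Hypotheses (i0_eq0 : i0 = 0%N :> nat) (j0_eq0 : j0 = 0%N :> nat).
Hypotheses (ci0 : ci i0 = 1%g) (dj0 : dj j0 = 1%g).
Hypotheses (ci_inj : injective ci) (dj_inj : injective dj).
Hypothesis cd1 : gr_mul (lincomb ci r setT) (lincomb dj s setT) = gr_one K G.
Hypotheses (r_neq0 : forall i, r i != 0) (s_neq0 : forall j, s j != 0).
Hypothesis unitK : forall x : K, x != 0 -> x \is a GRing.unit.
Local Notation T := ('I_M * 'I_N)%type.

Let mul_lincomb_one :=
  gr_mul_lincomb_block_closed (r := r) (s := s) i0_eq0 j0_eq0 ci0 dj0 ci_inj dj_inj.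

Lemma row_connected_of_realizable P :
  (1 < N)%N ->
  (forall m, (2 <= m < M)%N -> forall (G' : groupType) (x y : grpring K G'),
     rank x = m -> rank y = N -> gr_mul x y = gr_one K G' -> gr_mul y x = gr_one K G') ->
  partition P [set: T] -> part_le P (sigma_part ci dj) -> realizable P r s ->
  row_connected P.
Proof.
move=> N_gt1 inv_rank partP leP realP.
pose I0 := [set i | connect (row_rel P) i0 i].
have i0I0 : i0 \in I0 by rewrite inE connect0.
have c'd : gr_mul (lincomb ci r I0) (lincomb dj s setT) = gr_one K G.
  apply: mul_lincomb_one partP realP leP i0I0 (in_setT j0) _ => B BP p q pB qB.
  rewrite !inE /= !andbT => /connect_trans; apply; apply: connect1.
  apply/existsP; exists p.2; apply/existsP; exists q.2.
  by rewrite -!surjective_pairing (same_blockW BP pB qB).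
apply: (connect_sym_from (row_rel_sym P) (x := i0)) => i1; apply/idPn => i1NI0.
have {}i1NI0 : i1 \notin I0 by rewrite inE.
have [I0_le1 | I0_gt1] := leqP #|I0| 1.
  have I0E : I0 = [set i0] by apply/eqP; rewrite eq_sym eqEcard sub1set i0I0 cards1.
  pose j1 : 'I_N := Ordinal N_gt1.
  have dj1_neq1 : dj j1 != 1%g.
    by rewrite -dj0 (inj_eq dj_inj); apply/eqP => /(congr1 val); rewrite /= j0_eq0.
  have := congr1 (fun x : grpring K G => x (ci i0 * dj j1)%g) c'd.
  rewrite /= I0E gr_mul_lincomb_set1l // in_setT gr_oneE ci0 mul1g (negbTE dj1_neq1).
  by move/eqP; rewrite mulrI_eq0 ?(negbTE (s_neq0 _)) //; apply/mulrI/unitK.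
have I0_ltM : (#|I0| < M)%N.
  have : I0 \proper setT.
    by rewrite properT; apply: contraNneq i1NI0 => ->; rewrite in_setT.
  by move/proper_card; rewrite cardsT card_ord.
have rank_d : rank (lincomb dj s setT) = N by rewrite rank_lincomb // cardsT card_ord.
have I0_range : (2 <= #|I0| < M)%N by rewrite I0_gt1.
have dc' := inv_rank _ I0_range G _ _ (rank_lincomb ci_inj r_neq0 I0) rank_d c'd.
have := rank_lincomb ci_inj r_neq0 I0.
rewrite -(gr_inv_unique cd1 dc') rank_lincomb // cardsT card_ord => M_eq.
by rewrite -M_eq ltnn in I0_ltM.
Qed.

Lemma col_connected_of_realizable P :
  (1 < M)%N ->
  (forall n, (2 <= n < N)%N -> forall (G' : groupType) (x y : grpring K G'),
     rank x = M -> rank y = n -> gr_mul x y = gr_one K G' -> gr_mul y x = gr_one K G') ->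
  partition P [set: T] -> part_le P (sigma_part ci dj) -> realizable P r s ->
  col_connected P.
Proof.
move=> M_gt1 inv_rank partP leP realP.
pose J0 := [set j | connect (col_rel P) j0 j].
have j0J0 : j0 \in J0 by rewrite inE connect0.
have cd' : gr_mul (lincomb ci r setT) (lincomb dj s J0) = gr_one K G.
  apply: mul_lincomb_one partP realP leP (in_setT i0) j0J0 _ => B BP p q pB qB.
  rewrite !inE /= => /connect_trans; apply; apply: connect1.
  apply/existsP; exists p.1; apply/existsP; exists q.1.
  by rewrite -!surjective_pairing (same_blockW BP pB qB).
apply: (connect_sym_from (col_rel_sym P) (x := j0)) => j1; apply/idPn => j1NJ0.
have {}j1NJ0 : j1 \notin J0 by rewrite inE.
have [J0_le1 | J0_gt1] := leqP #|J0| 1.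
  have J0E : J0 = [set j0] by apply/eqP; rewrite eq_sym eqEcard sub1set j0J0 cards1.
  pose i1 : 'I_M := Ordinal M_gt1.
  have ci1_neq1 : ci i1 != 1%g.
    by rewrite -ci0 (inj_eq ci_inj); apply/eqP => /(congr1 val); rewrite /= i0_eq0.
  have := congr1 (fun x : grpring K G => x (ci i1 * dj j0)%g) cd'.
  rewrite /= J0E gr_mul_lincomb_set1r // in_setT gr_oneE dj0 mulg1 (negbTE ci1_neq1).
  by move/eqP; rewrite mulIr_eq0 ?(negbTE (r_neq0 _)) //; apply/mulIr/unitK.
have J0_ltN : (#|J0| < N)%N.
  have : J0 \proper setT.
    by rewrite properT; apply: contraNneq j1NJ0 => ->; rewrite in_setT.
  by move/proper_card; rewrite cardsT card_ord.
have rank_c : rank (lincomb ci r setT) = M by rewrite rank_lincomb // cardsT card_ord.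
have J0_range : (2 <= #|J0| < N)%N by rewrite J0_gt1.
have d'c := inv_rank _ J0_range G _ _ rank_c (rank_lincomb dj_inj s_neq0 J0) cd'.
have := rank_lincomb dj_inj s_neq0 J0.
rewrite (gr_inv_unique d'c cd1) rank_lincomb // cardsT card_ord => N_eq.
by rewrite -N_eq ltnn in J0_ltN.
Qed.

End Connectivity.

Theorem lemma4p17 (K : unitRingType) (M N : nat) (G : groupType)
    (c d : grpring K G)
    (ci : 'I_M -> G) (r : 'I_M -> K) (dj : 'I_N -> G) (s : 'I_N -> K) :
  (* K is a division ring *)
  (forall x : K, x != 0 -> x \is a GRing.unit) ->
  (2 <= M)%N -> (2 <= N)%N ->
  rank c = M -> rank d = N ->
  (1%g \in finsupp c) -> (1%g \in finsupp d) ->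
  gr_mul c d = gr_one K G ->
  (* c = r_0 c_0 + ... + r_{M-1} c_{M-1}, d = s_0 d_0 + ... + s_{N-1} d_{N-1} *)
  injective ci -> injective dj ->
  (forall i, r i != 0) -> (forall j, s j != 0) ->
  (forall g : G, c g = \sum_(i < M | ci i == g) r i) ->
  (forall g : G, d g = \sum_(j < N | dj j == g) s j) ->
  (forall i : 'I_M, nat_of_ord i = 0%N -> ci i = 1%g) ->
  (forall j : 'I_N, nat_of_ord j = 0%N -> dj j = 1%g) ->
  ((forall m : nat, (2 <= m < M)%N ->
      forall (G' : groupType) (x y : grpring K G'),
        rank x = m -> rank y = N -> gr_mul x y = gr_one K G' ->
        gr_mul y x = gr_one K G') ->
    row_connected (sigma_part ci dj) /\
    (forall P : {set {set 'I_M * 'I_N}},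
       partition P [set: 'I_M * 'I_N] -> part_le P (sigma_part ci dj) ->
       realizable P r s -> row_connected P))
  /\
  ((forall n : nat, (2 <= n < N)%N ->
      forall (G' : groupType) (x y : grpring K G'),
        rank x = M -> rank y = n -> gr_mul x y = gr_one K G' ->
        gr_mul y x = gr_one K G') ->
    col_connected (sigma_part ci dj) /\
    (forall P : {set {set 'I_M * 'I_N}},
       partition P [set: 'I_M * 'I_N] -> part_le P (sigma_part ci dj) ->
       realizable P r s -> col_connected P)).
Proof.
move=> unitK M_gt1 N_gt1 _ _ _ _ cd ci_inj dj_inj r_neq0 s_neq0 cE dE ci0 dj0.
pose i0 : 'I_M := Ordinal (ltnW M_gt1); pose j0 : 'I_N := Ordinal (ltnW N_gt1).
have [i0_eq0 j0_eq0] : i0 = 0%N :> nat /\ j0 = 0%N :> nat by split.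
have [ci0' dj0'] := (ci0 i0 i0_eq0, dj0 j0 j0_eq0).
rewrite (eq_lincombT cE) (eq_lincombT dE) in cd.
have sigma_real := realizable_sigma i0_eq0 j0_eq0 ci0' dj0' ci_inj dj_inj cd.
have sigma_le : part_le (sigma_part ci dj) (sigma_part ci dj) by apply: part_le_refl.
have row P := row_connected_of_realizable i0_eq0 j0_eq0 ci0' dj0' ci_inj dj_inj cd
  r_neq0 s_neq0 unitK (P := P) N_gt1.
have col P := col_connected_of_realizable i0_eq0 j0_eq0 ci0' dj0' ci_inj dj_inj cd
  r_neq0 s_neq0 unitK (P := P) M_gt1.
split=> inv_rank; split=> [|P]; [| exact: row P inv_rank | | exact: col P inv_rank].
  exact: row _ inv_rank (sigma_partition ci dj) sigma_le sigma_real.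
exact: col _ inv_rank (sigma_partition ci dj) sigma_le sigma_real.
Qed.
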